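(* Let $L=(L_1,\dots,L_N)$ be a contraction path (in the sense of the context), let $\{\phi_{P,q}\}$ be a family of nondecreasing maps $\mathbb{R}_{\ge 0}\to\mathbb{R}_{\ge 0}$ and $\oplus$ an operation as in the context, and let $f$ be the associated tree-separable cost function. Then the procedure $\mathrm{ORDER}(L)$ defined in the context returns a pair $(A,B)$ such that: (i) $A$ is a loop order for $L$ with $f(L,A)=\min_{A'} f(L,A')$, the minimum taken over all loop orders $A'$ for $L$; (ii) $B$ minimizes $f(L,B')$ over all loop orders $B'$ for $L$ whose root differs from the root of $A$ (and $B=\bot$, with cost $+\infty$, if no such loop order exists).
   Context: Indices are abstract symbols. A term is a triple $(K_1,K_2,K_3)$ of finite sets of indices (indices of the two operands and of the output of a pairwise contraction); its index set is $U(K_1,K_2,K_3)=K_1\cup K_2\cup K_3$. A contraction path is a finite sequence $L=(L_1,\dots,L_N)$ of terms with nonempty index sets ($N=0$ allowed). For a term $t$ and index $q$, $t\setminus q$ denotes the term obtained by deleting $q$ from each of its three sets. A loop order for $L$ is a tuple $A=(A_1,\dots,A_N)$ where each $A_i$ is a sequence listing every element of $U(L_i)$ exactly once. For $N\ge1$, the root of $A$ is $q=A_1[1]$. Peeling $A$: let $r$ be the largest integer with $A_1[1]=\dots=A_r[1]=q$. Then $L^{(1)}$ is the sequence $(L_1\setminus q,\dots,L_r\setminus q)$ with terms having empty index set deleted, and $A^{(1)}$ is the corresponding loop order for $L^{(1)}$ consisting of the sequences $A_i[2:]$ ($A_i$ with its first element removed) for those $i\le r$ with $|A_i|\ge2$;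 also $L^{(2)}=(L_{r+1},\dots,L_N)$ and $A^{(2)}=(A_{r+1},\dots,A_N)$. Cost function: let $\oplus$ be an associative binary operation on $\mathbb{R}_{\ge0}$ (extended to $+\infty$ in the obvious monotone way) that is nondecreasing in each argument and has $0$ as identity (e.g. $+$ or $\max$). For every contraction path $P$ and index $q$ let $\phi_{P,q}:\mathbb{R}_{\ge0}\to\mathbb{R}_{\ge0}$ be nondecreasing. The tree-separable cost $f$ is defined recursively by $f(L,A)=0$ if $N=0$, and otherwise $f(L,A)=\phi_{(L_1,\dots,L_r),q}\big(f(L^{(1)},A^{(1)})\big)\oplus f(L^{(2)},A^{(2)})$, with $q,r,L^{(i)},A^{(i)}$ from peeling. (Thus $\phi$ is applied at each loop of the fully fused loop-nest forest obtained by fusing common leading indices of consecutive terms, and costs of sibling subtrees are combined by $\oplus$.) Procedure $\mathrm{ORDER}(L)$: if $N=0$, return $(\emptyset,\bot)$ where $\emptyset$ is the empty loop order (cost $0$) and $\bot$ means ''no order'' (cost $+\infty$). Otherwise, for each $q\in U(L_1)$, let $k$ be the largest integer with $q\in U(L_i)$ for all $i\le k$; for each $s=1,\dots,k$: let $X$ be $(L_1\setminus q,\dots,L_s\setminus q)$ with empty-index-set terms deleted, and $Y=(L_{s+1},\dots,L_N)$; compute $(A^X,\cdot)=\mathrm{ORDER}(X)$ and $(\bar A^Y,\bar B^Y)=\mathrm{ORDER}(Y)$; set $A^Y=\bar B^Y$ if $Y$ is nonempty and the root of $\bar A^Y$ is $q$, and $A^Y=\bar A^Y$ otherwise. The candidate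 order $C_{q,s}$ has, for $i\le s$, $i$-th sequence equal to $q$ followed by the sequence for $L_i\setminus q$ in $A^X$ (just $(q)$ if that term was deleted), followed by the sequences of $A^Y$; its value is $\delta_{q,s}=\phi_{(L_1,\dots,L_s),q}\big(f(X,A^X)\big)\oplus f(Y,A^Y)$ (taken as $+\infty$ if $A^Y=\bot$). For each $q$ let $C_q$ be a candidate $C_{q,s}$ of minimal $\delta_{q,s}$. Return $A=C_{q^*}$ for a $q^*$ minimizing this value, and $B=C_{q'}$ for $q'\neq q^*$ minimizing this value among the remaining $q$ (or $\bot$ if $U(L_1)=\{q^*\}$). *)

From HB Require Import structures.
From mathcomp Require Import all_boot all_order all_algebra.
From mathcomp Require Import finmap.
From mathcomp Require Import reals.

Set Implicit Arguments.
Unset Strict Implicit.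
Unset Printing Implicit Defensive.

Import Order.TTheory GRing.Theory Num.Theory.
Local Open Scope fset_scope.

Section Paths.
Variable I : choiceType.

Definition term := ({fset I} * {fset I} * {fset I})%type.

Definition U (t : term) : {fset I} := t.1.1 `|` t.1.2 `|` t.2.

Definition tdel (t : term) (q : I) : term := ((t.1.1 `\ q, t.1.2 `\ q), t.2 `\ q).

Definition contraction_path (L : seq term) : bool := all (fun t => U t != fset0) L.

(* a loop order: one sequence of indices per term *)
Definition order := seq (seq I).

Fixpoint is_loop_order (L : seq term) (A : order) : Prop :=
  match L, A with
  | [::], [::] => True
  | t :: L', a :: A' =>
      (uniq a /\ forall x, (x \in a) = (x \in U t)) /\ is_loop_order L' A'
  | _, _ => False
  end.

Definition lroot (A : order) : option I :=
  if A is a :: _ then ohead a else None.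

(* largest k with q in U(L_i) for all i <= k *)
Definition kmax (q : I) (L : seq term) : nat := find (fun t => q \notin U t) L.

Definition Xpath (q : I) (s : nat) (L : seq term) : seq term :=
  [seq tdel t q | t <- take s L & U (tdel t q) != fset0].

Fixpoint build_prefix (q : I) (Ls : seq term) (AX : order) : order :=
  match Ls with
  | [::] => [::]
  | t :: Ls' =>
      if U (tdel t q) != fset0
      then (q :: head [::] AX) :: build_prefix q Ls' (behead AX)
      else [:: q] :: build_prefix q Ls' AX
  end.

Definition adjustY (q : I) (Y : seq term) (AYb : order) (BYb : option order)
  : option order :=
  if (~~ nilp Y) && (lroot AYb == Some q) then BYb else Some AYb.

Section Cost.
Variable R : realType.
Variable op : R -> R -> R.
Variable phi : seq term -> I -> R -> R.

(* Tree-separable cost, defined by peeling; the fuel argument only ensures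
   termination (fuel (size A + total length of A) + 1 is always sufficient). *)
Fixpoint fcost_fuel (n : nat) (L : seq term) (A : order) : R :=
  match n with
  | 0 => 0
  | n'.+1 =>
    match A with
    | (q :: _) :: _ =>
        let r := find (fun a => ohead a != Some q) A in
        let L1 := [seq tdel t q | t <- take r L & U (tdel t q) != fset0] in
        let A1 := [seq behead a | a <- take r A & 1 < size a] in
        op (phi (take r L) q (fcost_fuel n' L1 A1))
           (fcost_fuel n' (drop r L) (drop r A))
    | _ => 0
    end
  end.

Definition fcost (L : seq term) (A : order) : R :=
  fcost_fuel (size A + sumn (map size A)).+1 L A.

(* extended values R_{>=0} ∪ {+oo}, None = +oo *)
Definition ext_le (x y : option R) : bool :=
  match x, y with
  | _, None => true
  | None, Some _ => false
  | Some a, Some b => (a <= b)%R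
  end.

(* The (nondeterministic, w.r.t. tie-breaking) procedure ORDER, as the
   relation "ORDER L A B" = "ORDER(L) may return (A, B)", B = None meaning ⊥.
   cand q s / dl q s are the candidate C_{q,s} (None if A^Y = ⊥) and its value
   delta_{q,s} (None = +oo), computed from results of the recursive calls;
   sel q is the chosen s for C_q, qs = q*. *)
Inductive ORDER : seq term -> order -> option order -> Prop :=
| ORDER_nil : ORDER [::] [::] None
| ORDER_cons (t : term) (L' : seq term)
    (cand : I -> nat -> option order) (dl : I -> nat -> option R)
    (sel : I -> nat) (qs : I) (A : order) (B : option order) :
    (forall q s, q \in U t -> 0 < s <= kmax q (t :: L') ->
       exists AX BX AYb BYb,
         [/\ ORDER (Xpath q s (t :: L')) AX BX,
             ORDER (drop s (t :: L')) AYb BYb,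
             cand q s = omap (fun AY => build_prefix q (take s (t :: L')) AX ++ AY)
                          (adjustY q (drop s (t :: L')) AYb BYb)
           & dl q s = omap (fun AY =>
                         op (phi (take s (t :: L')) q
                                 (fcost (Xpath q s (t :: L')) AX))
                            (fcost (drop s (t :: L')) AY))
                          (adjustY q (drop s (t :: L')) AYb BYb)]) ->
    (forall q, q \in U t ->
       0 < sel q <= kmax q (t :: L') /\
       forall s, 0 < s <= kmax q (t :: L') -> ext_le (dl q (sel q)) (dl q s)) ->
    qs \in U t ->
    (forall q, q \in U t -> ext_le (dl qs (sel qs)) (dl q (sel q))) ->
    cand qs (sel qs) = Some A ->
    ((U t = [fset qs] /\ B = None) \/
     exists q', [/\ q' \in U t, q' != qs,
                  (forall q, q \in U t -> q != qs ->
                     ext_le (dl q' (sel q')) (dl q (sel q)))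
                & B = cand q' (sel q')]) ->
    ORDER (t :: L') A B.

End Cost.
End Paths.

From Pilot Require Import Defs.
From HB Require Import structures.
From mathcomp Require Import all_boot all_order all_algebra.
From mathcomp Require Import finmap.
From mathcomp Require Import reals.
From mathcomp Require boolp.
From mathcomp Require Import zify.
Import Order.TTheory GRing.Theory Num.Theory.

Set Implicit Arguments.
Unset Strict Implicit.
Unset Printing Implicit Defensive.

(* A loop order A of L = t :: L' with root q splits, by peeling, into the run
   of the first r = rr q A sequences starting with q (with 0 < r <= kmax q L),
   a loop order of the reduced prefix X = Xpath q r L, and a loop order of the
   suffix Y = drop r L whose root is not q; conversely gluing such pieces
   (build_prefix) gives a loop order of L with root q.  The cost satisfies
   f(L,A) = phi(f(X,A_X)) (+) f(Y,A_Y) on both sides of this correspondence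
   (fcost_cons, glue_loop_order), so by monotonicity of phi and (+) the best
   order with root q is obtained from an optimal order of X and an optimal
   order of Y with root different from q; the latter is the first or second
   output of ORDER(Y).  Hence, by well-founded induction on the total size of
   L, every output (A, B) of ORDER is optimal (order_sound), and ORDER always
   has an output (order_exists), since every candidate value with s = kmax q L
   is finite and minima over finite nonempty sets exist. *)

Section Proof.
Variable R : realType.
Variable I : choiceType.
Variable op : R -> R -> R.
Variable phi : seq (term I) -> I -> R -> R.
Hypothesis op_ge0 : forall x y : R, (0 <= x)%R -> (0 <= y)%R -> (0 <= op x y)%R.
Hypothesis op_monol : forall x x' y : R, (0 <= x)%R -> (x <= x')%R -> (0 <= y)%R ->
  (op x y <= op x' y)%R.
Hypothesis op_monor : forall x y y' : R, (0 <= x)%R -> (0 <= y)%R -> (y <= y')%R ->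
  (op x y <= op x y')%R.
Hypothesis phi_ge0 : forall P q (x : R), (0 <= x)%R -> (0 <= phi P q x)%R.
Hypothesis phi_mono : forall P q (x y : R), (0 <= x)%R -> (x <= y)%R ->
  (phi P q x <= phi P q y)%R.

Implicit Types (L Ls Y : seq (term I)) (A As AX AY : Defs.order I) (t : term I) (q : I).

Local Notation ff := (fcost_fuel op phi).
Local Notation fc := (fcost op phi).
Local Notation ORD := (ORDER op phi).

(* Size of a loop order: number of sequences plus total number of entries;
   it strictly decreases along both recursive calls of the cost. *)
Definition osize A := size A + sumn (map size A).

Definition rr q A := find (fun a => ohead a != Some q) A.

Definition peelA (r : nat) A := [seq behead a | a <- take r A & 1 < size a].

Lemma rr_cons q a A : rr q ((q :: a) :: A) = (rr q A).+1.
Proof. by rewrite /rr /= eqxx. Qed.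

Lemma osize_peel r A : osize (peelA r A) <= sumn (map size A).
Proof.
rewrite /peelA; apply: leq_trans (_ : sumn (map size (take r A)) <= _); last first.
  by rewrite -{2}(cat_take_drop r A) map_cat sumn_cat leq_addr.
elim: (take r A) => [|b B IH] //=; rewrite /osize /= in IH *.
case: ifP => h /=; last by lia.
rewrite size_behead; lia.
Qed.

Lemma osize_drop r A : osize (drop r A) <= osize A.
Proof.
have := congr1 (fun s => sumn (map size s)) (cat_take_drop r A).
rewrite map_cat sumn_cat /= => e.
rewrite /osize size_drop; have := leq_subr r (size A); lia.
Qed.

Lemma osize_recursive q a A (B := (q :: a) :: A) :
  osize (peelA (rr q B) B) < osize B /\ osize (drop (rr q B) B) < osize B.
Proof.
split; first by apply: leq_ltn_trans (osize_peel _ _) _; rewrite /osize /B /=; lia.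
rewrite /B rr_cons /=; apply: leq_ltn_trans (osize_drop _ _) _; rewrite /osize /=; lia.
Qed.

Lemma ff_S n L q a A (B := (q :: a) :: A) :
  ff n.+1 L B = op (phi (take (rr q B) L) q (ff n (Xpath q (rr q B) L) (peelA (rr q B) B)))
                   (ff n (drop (rr q B) L) (drop (rr q B) B)).
Proof. by []. Qed.

Lemma fuel_enough n L A : osize A < n -> ff n.+1 L A = ff n L A.
Proof.
elim: n L A => [|n IH] L A //.
case: A => [|[|q a] A'] // h.
have [h1 h2] := osize_recursive q a A'.
rewrite ff_S [RHS]ff_S !IH //; [apply: leq_trans h2 _ | apply: leq_trans h1 _];
  by rewrite -ltnS.
Qed.

Lemma fuelE n L A : osize A < n -> ff n L A = fc L A.
Proof.
have fuel_ge m k : osize A < m -> m <= k -> ff k L A = ff m L A.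
  move=> hm; elim: k => [|k IH]; first by rewrite leqn0 => /eqP ->.
  rewrite leq_eqVlt => /orP[/eqP -> //|hk].
  rewrite fuel_enough ?IH //; lia.
move=> h; rewrite /fcost.
case: (leqP n (osize A).+1) => hn; first exact: fuel_ge.
by rewrite (fuel_ge (osize A).+1) // ltnW.
Qed.

Lemma fcost_cons L q a A' (A := (q :: a) :: A') :
  fc L A = op (phi (take (rr q A) L) q (fc (Xpath q (rr q A) L) (peelA (rr q A) A)))
              (fc (drop (rr q A) L) (drop (rr q A) A)).
Proof.
have [h1 h2] := osize_recursive q a A'.
by rewrite /fcost /A ff_S -/A !fuelE.
Qed.

Lemma fc_ge0 L A : (0 <= fc L A)%R.
Proof.
rewrite /fcost; move: (_.+1) => n; elim: n L A => [|n IH] L A //=.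
case: A => [|[|q a] A'] //; apply: op_ge0 => //; exact: phi_ge0.
Qed.

Lemma opphi_mono P q x x' y y' : (0 <= x)%R -> (x <= x')%R -> (0 <= y)%R -> (y <= y')%R ->
  (op (phi P q x) y <= op (phi P q x') y')%R.
Proof.
move=> hx hxx hy hyy.
apply: le_trans (op_monol (phi_ge0 P q hx) (phi_mono P q hx hxx) hy) _.
apply: op_monor => //; apply: phi_ge0; exact: le_trans hxx.
Qed.

Local Open Scope fset_scope.

Definition lo_seq t (a : seq I) := uniq a /\ forall x, (x \in a) = (x \in U t).

Lemma U_tdel t q : U (tdel t q) = U t `\ q.
Proof.
apply/fsetP=> x; rewrite /U /tdel !inE.
by case: (x == q); case: (x \in t.1.1); case: (x \in t.1.2).
Qed.

Lemma lo_size L A : is_loop_order L A -> size A = size L.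
Proof. by elim: L A => [|t L IH] [|a A] //= [_ /IH ->]. Qed.

Lemma lo_take r L A : is_loop_order L A -> is_loop_order (take r L) (take r A).
Proof. by elim: L A r => [|t L IH] [|a A] [|r] //= [h1 /IH]. Qed.

Lemma lo_drop r L A : is_loop_order L A -> is_loop_order (drop r L) (drop r A).
Proof. by elim: L A r => [|t L IH] [|a A] [|r] //= [_ /IH]. Qed.

Lemma lo_cat L1 A1 L2 A2 : is_loop_order L1 A1 -> is_loop_order L2 A2 ->
  is_loop_order (L1 ++ L2) (A1 ++ A2).
Proof. by elim: L1 A1 => [|t L IH] [|a A] //= [h1 h2] h; split => //; exact: IH. Qed.

Lemma lo_seq_nil t a : lo_seq t a -> (U t == fset0) = (a == [::]).
Proof.
case=> _; case: a => [|x a] h.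
  by rewrite eqxx; apply/eqP/fsetP => y; rewrite -h inE.
by apply/negbTE/fset0Pn; exists x; rewrite -h inE eqxx.
Qed.

Lemma lo_head t L A : U t != fset0 -> is_loop_order (t :: L) A ->
  exists q a A', A = (q :: a) :: A' /\ q \in U t.
Proof.
case: A => [|[|q a] A'] //= ht [hs _].
  by move: (@lo_seq_nil t [::] hs); rewrite eqxx (negbTE ht).
by exists q, a, A'; split => //; case: hs => _ <-; rewrite inE eqxx.
Qed.

Lemma cp_cons t L : contraction_path (t :: L) = (U t != fset0) && contraction_path L.
Proof. by []. Qed.

Lemma cp_drop r L : contraction_path L -> contraction_path (drop r L).
Proof. by elim: L r => [|t L IH] [|r] // /andP[_ h]; exact: IH. Qed.

Lemma cp_Xpath q s L : contraction_path (Xpath q s L).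
Proof.
rewrite /contraction_path /Xpath all_map; apply/allP => t.
by rewrite mem_filter => /andP[].
Qed.

Lemma drop_find_head (T : Type) (p : pred T) s x s' :
  drop (find p s) s = x :: s' -> p x.
Proof. by elim: s => [|y s IH] //=; case: ifP => [hy [<- _] //|_]; exact: IH. Qed.

Lemma rr_le_kmax q L A : is_loop_order L A -> rr q A <= kmax q L.
Proof.
rewrite /rr /kmax; elim: L A => [|t L IH] [|a A] //= [[hu hm] h].
case: ifP => // /negbFE /eqP ha.
have -> : q \in U t by rewrite -hm; case: a ha {hu hm} => //= x a [->]; rewrite inE eqxx.
by rewrite /= ltnS IH.
Qed.

Lemma all_take_rr q A : all (fun a => ohead a == Some q) (take (rr q A) A).
Proof. by rewrite /rr; elim: A => [|a A IH] //=; case: ifP => //= /negbFE ->. Qed.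

Lemma lo_peel q Ls As : is_loop_order Ls As -> all (fun a => ohead a == Some q) As ->
  is_loop_order [seq tdel t q | t <- Ls & U (tdel t q) != fset0]
                [seq behead a | a <- As & 1 < size a].
Proof.
elim: Ls As => [|t Ls IH] [|a As] //= [[hu hm] h] /andP[ha hall].
case: a ha hu hm => //= x a /eqP[->] /andP[hq hu] hm.
have hs : lo_seq (tdel t q) a.
  split => // y; rewrite U_tdel in_fsetD1 -hm inE.
  by case: (eqVneq y q) => [->|] //=; rewrite (negbTE hq).
have := lo_seq_nil hs; case: a {hu hm hq} hs => [|y a] hs /= -> /=; first exact: IH.
by split; [exact: hs | exact: IH].
Qed.

Lemma decompose t L A : contraction_path (t :: L) -> is_loop_order (t :: L) A ->
  exists q a A', [/\ A = (q :: a) :: A', q \in U t,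
    0 < rr q A <= kmax q (t :: L),
    is_loop_order (Xpath q (rr q A) (t :: L)) (peelA (rr q A) A) &
    is_loop_order (drop (rr q A) (t :: L)) (drop (rr q A) A) /\
    (drop (rr q A) (t :: L) = [::] \/ lroot (drop (rr q A) A) != Some q)].
Proof.
rewrite cp_cons => /andP[ht hL] hA.
have [q [a [A' [eA hq]]]] := lo_head ht hA.
exists q, a, A'; split => //.
- by rewrite rr_le_kmax // andbT eA rr_cons.
- by apply: lo_peel; [exact: lo_take | exact: all_take_rr].
split; first exact: lo_drop.
case e: (drop (rr q A) A) => [|b B]; last by right; rewrite /= (drop_find_head e).
by left; apply/eqP; rewrite -size_eq0 -(lo_size (lo_drop _ hA)) e.
Qed.

Lemma size_build q Ls AX : size (build_prefix q Ls AX) = size Ls.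
Proof. by elim: Ls AX => [|t Ls IH] AX //=; case: ifP => _ /=; rewrite IH. Qed.

Lemma rr_glue q Ls AX AY : (AY = [::] \/ lroot AY != Some q) ->
  rr q (build_prefix q Ls AX ++ AY) = size Ls.
Proof.
move=> hY; rewrite /rr; elim: Ls AX => [|t Ls IH] AX /=.
  by case: hY => [->|]; case: AY => [|b AY] //= ->.
by case: ifP => _ /=; rewrite eqxx /= IH.
Qed.

Lemma peel_build q Ls AX :
  is_loop_order [seq tdel t q | t <- Ls & U (tdel t q) != fset0] AX ->
  [seq behead a | a <- build_prefix q Ls AX & 1 < size a] = AX.
Proof.
elim: Ls AX => [|t Ls IH] AX /=; first by case: AX.
case: ifP => ht /=; last exact: IH.
case: AX => [|a AX] //= [hs h].
have := lo_seq_nil hs; rewrite (negbTE ht); case: a hs => [|x a] hs //= _.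
by rewrite IH.
Qed.

Lemma lo_build q Ls AX : all (fun t => q \in U t) Ls ->
  is_loop_order [seq tdel t q | t <- Ls & U (tdel t q) != fset0] AX ->
  is_loop_order Ls (build_prefix q Ls AX).
Proof.
elim: Ls AX => [|t Ls IH] AX //= /andP[hq hall].
case: ifP => ht /=.
  case: AX => [|a AX] //= [[hu hm] h]; split; last exact: IH.
  split; first by rewrite /= hu andbT hm U_tdel in_fsetD1 eqxx.
  by move=> y; rewrite inE hm U_tdel in_fsetD1; case: (eqVneq y q) => [->|].
move=> h; split; last exact: IH.
split => // y; rewrite inE.
move/negbFE: ht; rewrite U_tdel => /eqP /fsetP /(_ y); rewrite in_fsetD1 inE.
by case: (eqVneq y q) => [->|] //= _ ->.
Qed.

Lemma all_take_kmax q s L : s <= kmax q L -> all (fun t => q \in U t) (take s L).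
Proof.
rewrite /kmax; elim: L s => [|t L IH] [|s] //=.
by case: ifP => //= /negbFE -> /IH.
Qed.

Lemma glue_loop_order L q s AX AY : 0 < s <= kmax q L ->
  is_loop_order (Xpath q s L) AX -> is_loop_order (drop s L) AY ->
  (drop s L = [::] \/ lroot AY != Some q) ->
  [/\ is_loop_order L (build_prefix q (take s L) AX ++ AY),
      lroot (build_prefix q (take s L) AX ++ AY) = Some q &
      fc L (build_prefix q (take s L) AX ++ AY) =
      op (phi (take s L) q (fc (Xpath q s L) AX)) (fc (drop s L) AY)].
Proof.
move=> /andP[s0 hs] hX hY hYr.
have hk : s <= size L by apply: leq_trans hs (find_size _ _).
have hsz : size (build_prefix q (take s L) AX) = s by rewrite size_build size_takel.
have hYr' : AY = [::] \/ lroot AY != Some q.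
  case: hYr => [e|]; [left | by right].
  by apply/eqP; rewrite -size_eq0 (lo_size hY) e.
have [a0 [B0 eC]] : exists a0 B0, build_prefix q (take s L) AX ++ AY = (q :: a0) :: B0.
  case e: (take s L) => [|t0 Ls0]; first by move: hsz; rewrite e => /= h; rewrite -h in s0.
  by rewrite /=; case: ifP => _; eexists; eexists.
split; last 1 first.
- rewrite eC fcost_cons -eC (rr_glue _ _ hYr') size_takel //.
  by rewrite /peelA (take_size_cat _ hsz) (peel_build hX) (drop_size_cat _ hsz).
- rewrite -{1}(cat_take_drop s L); apply: lo_cat => //.
  exact: lo_build (all_take_kmax hs) hX.
- by rewrite eC.
Qed.

Lemma ext_le_refl (x : option R) : ext_le x x.
Proof. by case: x => //= a; exact: lexx. Qed.

Lemma ext_le_trans (x y z : option R) : ext_le x y -> ext_le y z -> ext_le x z.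
Proof. by case: x; case: y; case: z => //= a b c; exact: le_trans. Qed.

Lemma ext_le_total (x y : option R) : ext_le x y || ext_le y x.
Proof. by case: x; case: y => //= a b; exact: le_total. Qed.

Lemma ext_le_Some (x : option R) b : ext_le x (Some b) -> exists2 a, x = Some a & (a <= b)%R.
Proof. by case: x => // a h; exists a. Qed.

Lemma seq_min (T : eqType) (g : T -> option R) (s : seq T) : s != [::] ->
  exists2 x, x \in s & forall y, y \in s -> ext_le (g x) (g y).
Proof.
elim: s => [|x s IH] // _.
case: (eqVneq s [::]) => [->|hs].
  by exists x; rewrite ?inE // => y; rewrite inE => /eqP ->; exact: ext_le_refl.
have [m hm hmin] := IH hs.
case: (boolP (ext_le (g x) (g m))) => h.
  exists x; first by rewrite inE eqxx.
  move=> y; rewrite inE => /orP[/eqP ->|hy]; first exact: ext_le_refl.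
  exact: ext_le_trans h (hmin _ hy).
exists m; first by rewrite inE hm orbT.
have h' : ext_le (g m) (g x) by move: (ext_le_total (g x) (g m)); rewrite (negbTE h).
by move=> y; rewrite inE => /orP[/eqP ->|hy] //; exact: hmin.
Qed.

Lemma fset_min (S : {fset I}) (g : I -> option R) : S != fset0 ->
  exists2 x, x \in S & forall y, y \in S -> ext_le (g x) (g y).
Proof.
move=> /fset0Pn [z hz].
have hne : enum_fset S != [::] by move: (hz : z \in enum_fset S); case: (enum_fset S).
by have [x hx hmin] := seq_min g hne; exists x.
Qed.

Definition optimal_pair L A (B : option (Defs.order I)) :=
  [/\ is_loop_order L A,
      (forall A', is_loop_order L A' -> (fc L A <= fc L A')%R)
    & match B with
      | Some B0 =>
          [/\ is_loop_order L B0, lroot B0 != lroot A &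
              forall B', is_loop_order L B' -> lroot B' != lroot A ->
                (fc L B0 <= fc L B')%R]
      | None => forall B', is_loop_order L B' -> lroot B' = lroot A
      end].

Lemma adjustY_ok Y q AYb BYb AY : optimal_pair Y AYb BYb ->
  adjustY q Y AYb BYb = Some AY -> is_loop_order Y AY /\ (Y = [::] \/ lroot AY != Some q).
Proof.
case=> hlo hopt hB; rewrite /adjustY; case: ifP => [/andP[hn /eqP hr] | hc].
  by move=> eB; rewrite eB in hB; case: hB => h1 h2 _; split => //; right; rewrite -hr.
case=> <-; split => //; case: Y hc {hlo hopt hB} => [|y Y] /=; first by left.
by move=> ->; right.
Qed.

Lemma adjustY_opt Y q AYb BYb A' : optimal_pair Y AYb BYb -> is_loop_order Y A' ->
  (Y = [::] \/ lroot A' != Some q) ->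
  exists AY, adjustY q Y AYb BYb = Some AY /\ (fc Y AY <= fc Y A')%R.
Proof.
case=> hlo hopt hB hA' hr; rewrite /adjustY; case: ifP => [/andP[hn /eqP e] | hc].
  have hr' : lroot A' != lroot AYb by rewrite e; case: hr => // eY; rewrite eY in hn.
  case: BYb hB => [B0 [h1 h2 h3]|hB]; first by exists B0; split => //; exact: h3.
  by rewrite (hB _ hA') eqxx in hr'.
by exists AYb; split => //; exact: hopt.
Qed.

(* For s = kmax q L the suffix does not start with a term containing q, so
   adjustY never returns ⊥: each q has a candidate of finite value. *)
Lemma adjustY_kmax L q AYb BYb : contraction_path L ->
  is_loop_order (drop (kmax q L) L) AYb ->
  exists AY, adjustY q (drop (kmax q L) L) AYb BYb = Some AY.
Proof.
move=> hL; rewrite /adjustY; case e: (drop (kmax q L) L) => [|y Y] hA; first by eexists.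
have hy : q \notin U y by have := drop_find_head e.
have := cp_drop (kmax q L) hL; rewrite e cp_cons => /andP[hy0 _].
have [q0 [a [A' [eA hq0]]]] := lo_head hy0 hA.
rewrite eA /=; case: (eqVneq q0 q) => [eq|ne]; first by rewrite -eq hq0 in hy.
have -> : (Some q0 == Some q) = false by apply/eqP; case; apply/eqP.
by eexists.
Qed.

(* Total size of a path; it decreases along the recursive calls of ORDER. *)
Definition muL L := (size L + sumn [seq #|` U t| | t <- L])%N.

Lemma muL_cat L1 L2 : muL (L1 ++ L2) = (muL L1 + muL L2)%N.
Proof. rewrite /muL size_cat map_cat sumn_cat; lia. Qed.

Lemma muL_peel q Ls : all (fun t => q \in U t) Ls ->
  (muL [seq tdel t q | t <- Ls & U (tdel t q) != fset0] + size Ls <= muL Ls)%N.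
Proof.
rewrite /muL; elim: Ls => [|t Ls IH] //= /andP[hq hall].
have := IH hall; have := cardfsD1 q (U t); rewrite hq U_tdel.
case: ifP => _ /=; rewrite ?U_tdel; lia.
Qed.

Lemma muL_X q s L : 0 < s <= kmax q L -> muL (Xpath q s L) < muL L.
Proof.
move=> /andP[s0 hs].
have hk : s <= size L by apply: leq_trans hs (find_size _ _).
have := muL_peel (all_take_kmax hs); rewrite size_takel //.
have := muL_cat (take s L) (drop s L); rewrite cat_take_drop /Xpath; lia.
Qed.

Lemma muL_drop s t L : 0 < s -> muL (drop s (t :: L)) < muL (t :: L).
Proof.
case: s => [|s] // _ /=.
have := muL_cat (take s L) (drop s L); rewrite cat_take_drop /muL /=; lia.
Qed.

Definition sound L := forall A B, ORD L A B -> optimal_pair L A B.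

Definition subs_sound L :=
  forall q s, 0 < s <= kmax q L -> sound (Xpath q s L) /\ sound (drop s L).

Definition cand_spec t L' (cand : I -> nat -> option (Defs.order I))
    (dl : I -> nat -> option R) :=
  forall q s, q \in U t -> 0 < s <= kmax q (t :: L') ->
    exists AX BX AYb BYb,
      [/\ ORD (Xpath q s (t :: L')) AX BX,
          ORD (drop s (t :: L')) AYb BYb,
          cand q s = omap (fun AY => build_prefix q (take s (t :: L')) AX ++ AY)
                       (adjustY q (drop s (t :: L')) AYb BYb)
        & dl q s = omap (fun AY =>
                      op (phi (take s (t :: L')) q (fc (Xpath q s (t :: L')) AX))
                         (fc (drop s (t :: L')) AY))
                       (adjustY q (drop s (t :: L')) AYb BYb)].

Definition sel_spec t L' (dl : I -> nat -> option R) (sel : I -> nat) :=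
  forall q, q \in U t ->
    0 < sel q <= kmax q (t :: L') /\
    forall s, 0 < s <= kmax q (t :: L') -> ext_le (dl q (sel q)) (dl q s).

Lemma kmax_gt0 q t L : q \in U t -> 0 < kmax q (t :: L) <= kmax q (t :: L).
Proof. by rewrite leqnn andbT /kmax /= => ->. Qed.

Section Candidates.
Variables (t : term I) (L' : seq (term I)).
Variables (cand : I -> nat -> option (Defs.order I)) (dl : I -> nat -> option R).
Hypothesis hL : contraction_path (t :: L').
Hypothesis Hsub : subs_sound (t :: L').
Hypothesis Hc : cand_spec t L' cand dl.

Lemma candidate_ok q s C : q \in U t -> 0 < s <= kmax q (t :: L') ->
  cand q s = Some C ->
  [/\ is_loop_order (t :: L') C, lroot C = Some q & dl q s = Some (fc (t :: L') C)].
Proof.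
move=> hq hs eC.
have [AX [BX [AYb [BYb [HX HY Hcq Hdq]]]]] := Hc hq hs.
have [/(_ _ _ HX) [hXlo _ _] /(_ _ _ HY) GY] := Hsub hs.
move: Hcq Hdq; rewrite eC; case E: (adjustY _ _ _ _) => [AY|] //= [->] ->.
have [hAY hr] := adjustY_ok GY E.
by have [h1 h2 ->] := glue_loop_order hs hXlo hAY hr.
Qed.

Lemma candidate_some q s v : q \in U t -> 0 < s <= kmax q (t :: L') ->
  dl q s = Some v -> exists C, cand q s = Some C.
Proof.
move=> hq hs; have [AX [BX [AYb [BYb [_ _ -> ->]]]]] := Hc hq hs.
by case: (adjustY _ _ _ _) => //= AY _; eexists.
Qed.

Lemma candidate_kmax q : q \in U t -> exists v, dl q (kmax q (t :: L')) = Some v.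
Proof.
move=> hq; have hk := kmax_gt0 L' hq.
have [AX [BX [AYb [BYb [HX HY _ ->]]]]] := Hc hq hk.
have [_ /(_ _ _ HY) [hYlo _ _]] := Hsub hk.
by have [AY ->] := adjustY_kmax BYb hL hYlo; eexists.
Qed.

Lemma selected_finite sel q : sel_spec t L' dl sel -> q \in U t ->
  exists v, dl q (sel q) = Some v.
Proof.
move=> Hs hq; have [_ hmin] := Hs q hq; have [v hv] := candidate_kmax hq.
by have := hmin _ (kmax_gt0 L' hq); rewrite hv => /ext_le_Some [w -> _]; exists w.
Qed.

Lemma selected_lower sel A' : sel_spec t L' dl sel -> is_loop_order (t :: L') A' ->
  exists q w, [/\ lroot A' = Some q, q \in U t, dl q (sel q) = Some w &
                  (w <= fc (t :: L') A')%R].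
Proof.
move=> Hs hA'.
have [q [a [A'' [eA hq hr hXlo [hYlo hYr]]]]] := decompose hL hA'.
have [AX [BX [AYb [BYb [HX HY _ Hdq]]]]] := Hc hq hr.
have [/(_ _ _ HX) [_ optX _] /(_ _ _ HY) GY] := Hsub hr.
have [AY [E le]] := adjustY_opt GY hYlo hYr.
have [_ /(_ _ hr)] := Hs q hq; rewrite Hdq E /= => /ext_le_Some [w hw hwv].
exists q, w; split => //; first by rewrite eA.
apply: le_trans hwv _; rewrite eA fcost_cons -eA.
by apply: opphi_mono; rewrite ?fc_ge0 //; exact: optX.
Qed.

(* One step of ORDER can always be completed: choose a best split point for
   every q, then a best and a second-best root among the finite candidates. *)
Lemma order_step : exists A B, ORD (t :: L') A B.
Proof.
have ht : U t != fset0 by move: hL; rewrite cp_cons => /andP[].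
have best_split q : exists s, q \in U t -> 0 < s <= kmax q (t :: L') /\
    forall s', 0 < s' <= kmax q (t :: L') -> ext_le (dl q s) (dl q s').
  case: (boolP (q \in U t)) => hq; last by exists 0.
  have hne : iota 1 (kmax q (t :: L')) != [::].
    by rewrite -size_eq0 size_iota -lt0n (andP (kmax_gt0 L' hq)).1.
  have [s hs hmin] := seq_min (dl q) hne.
  exists s => _; split; first by move: hs; rewrite mem_iota add1n ltnS.
  by move=> s' hs'; apply: hmin; rewrite mem_iota add1n ltnS.
pose sel q := projT1 (boolp.choice best_split) q.
have Hs : sel_spec t L' dl sel by move=> q; exact: (projT2 (boolp.choice best_split) q).
have [qs hqs hqmin] := fset_min (fun q => dl q (sel q)) ht.
have [A eA] : exists A, cand qs (sel qs) = Some A.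
  have [v hv] := selected_finite Hs hqs.
  exact: candidate_some hqs (proj1 (Hs qs hqs)) hv.
case: (eqVneq (U t `\ qs) fset0) => hD.
  exists A, None; apply: (ORDER_cons (cand := cand) (dl := dl) (sel := sel) (qs := qs)) => //.
  left; split => //; apply/fsetP => x; rewrite inE.
  move/fsetP: hD => /(_ x); rewrite in_fsetD1 inE.
  by case: (eqVneq x qs) => [->|] //= _ ->.
have [q' hq' hq'min] := fset_min (fun q => dl q (sel q)) hD.
exists A, (cand q' (sel q')).
apply: (ORDER_cons (cand := cand) (dl := dl) (sel := sel) (qs := qs)) => //.
right; exists q'; move: hq'; rewrite in_fsetD1 => /andP[hne hq'].
by split => // q hq hqne; apply: hq'min; rewrite in_fsetD1 hqne.
Qed.

End Candidates.

Lemma sound_nil : sound [::].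
Proof.
move=> A B HO; inversion HO; subst; split => //; first by case=> // _; exact: lexx.
by case.
Qed.

Lemma order_cons_sound t L' : contraction_path (t :: L') -> subs_sound (t :: L') ->
  sound (t :: L').
Proof.
move=> hL Hsub A B HO.
inversion HO as [|t0 L0 cand dl sel qs A0 B0 Hc Hs Hq Hm HA HB]; subst.
have ht : U t != fset0 by move: hL; rewrite cp_cons => /andP[].
have [hAlo hAr hAd] := candidate_ok Hsub Hc Hq (proj1 (Hs qs Hq)) HA.
split => //.
  move=> A' /(selected_lower hL Hsub Hc Hs) [q [w [_ hq hw hwA']]].
  by move: (Hm q hq); rewrite hAd hw => /= /le_trans; apply.
case: HB => [[hU ->]| [q' [hq' hne hmin' ->]]].
  move=> B' hB'; have [q0 [a [B'' [-> hq0]]]] := lo_head ht hB'.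
  by rewrite hAr; move: hq0; rewrite hU inE => /eqP ->.
have hs' := proj1 (Hs q' hq').
have [v hv] := selected_finite hL Hsub Hc Hs hq'.
have [C eC] := candidate_some Hc hq' hs' hv.
have [hClo hCr hCd] := candidate_ok Hsub Hc hq' hs' eC.
rewrite eC; split => //; first by rewrite hCr hAr; apply/eqP; case; exact/eqP.
move=> B' /[dup] hB' /(selected_lower hL Hsub Hc Hs) [q [w [hBr hq hw hwB']]] hBne.
have hqne : q != qs by apply: contraNneq hBne => e; rewrite hBr hAr e.
by move: (hmin' q hq hqne); rewrite hCd hw => /= /le_trans; apply.
Qed.

Theorem order_sound L : contraction_path L -> sound L.
Proof.
move: {2}(muL L).+1 (ltnSn (muL L)) => n; elim: n L => [|n IH] L // hn hL.
case: L hn hL => [|t L'] hn hL; first exact: sound_nil.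
apply: order_cons_sound (hL) _ => q s hs; split; apply: IH.
- exact: leq_trans (muL_X hs) hn.
- exact: cp_Xpath.
- exact: leq_trans (muL_drop _ _ (andP hs).1) hn.
- exact: cp_drop _ hL.
Qed.

Lemma cand_spec_exists t L' :
  (forall q s, q \in U t -> 0 < s <= kmax q (t :: L') ->
     (exists AX BX, ORD (Xpath q s (t :: L')) AX BX) /\
     (exists AY BY, ORD (drop s (t :: L')) AY BY)) ->
  exists cand dl, cand_spec t L' cand dl.
Proof.
move=> Hex; pose L := t :: L'.
have outputs q s : exists w : Defs.order I * option (Defs.order I) * Defs.order I *
                              option (Defs.order I),
    (q \in U t) && (0 < s <= kmax q L) ->
    ORD (Xpath q s L) w.1.1.1 w.1.1.2 /\ ORD (drop s L) w.1.2 w.2.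
  case: (boolP ((q \in U t) && (0 < s <= kmax q L))) => [/andP[hq hs]|_];
    last by exists ([::], None, [::], None).
  have [[AX [BX HX]] [AY [BY HY]]] := Hex q s hq hs.
  by exists (AX, BX, AY, BY).
pose W q := projT1 (boolp.choice (outputs q)).
have HW q s : (q \in U t) && (0 < s <= kmax q L) ->
    ORD (Xpath q s L) (W q s).1.1.1 (W q s).1.1.2 /\ ORD (drop s L) (W q s).1.2 (W q s).2.
  exact: (projT2 (boolp.choice (outputs q)) s).
exists (fun q s => omap (fun AY => build_prefix q (take s L) (W q s).1.1.1 ++ AY)
                     (adjustY q (drop s L) (W q s).1.2 (W q s).2)).
exists (fun q s => omap (fun AY => op (phi (take s L) q (fc (Xpath q s L) (W q s).1.1.1))
                                     (fc (drop s L) AY))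
                     (adjustY q (drop s L) (W q s).1.2 (W q s).2)).
move=> q s hq hs; have [HX HY] := HW q s (introT andP (conj hq hs)).
by exists (W q s).1.1.1, (W q s).1.1.2, (W q s).1.2, (W q s).2.
Qed.

Theorem order_exists L : contraction_path L -> exists A B, ORD L A B.
Proof.
move: {2}(muL L).+1 (ltnSn (muL L)) => n; elim: n L => [|n IH] L // hn hL.
case: L hn hL => [|t L'] hn hL; first by exists [::], None; constructor.
have Hsub : subs_sound (t :: L').
  by move=> q s hs; split; apply: order_sound; [exact: cp_Xpath | exact: cp_drop _ hL].
have [cand [dl Hc]] : exists cand dl, cand_spec t L' cand dl.
  apply: cand_spec_exists => q s hq hs; split; apply: IH.
  - exact: leq_trans (muL_X hs) hn.
  - exact: cp_Xpath.
  - exact: leq_trans (muL_drop _ _ (andP hs).1) hn.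
  - exact: cp_drop _ hL.
exact: order_step hL Hsub Hc.
Qed.

End Proof.

Local Open Scope ring_scope.

Theorem mainTheorem1 (R : realType) (I : choiceType)
    (op : R -> R -> R) (phi : seq (term I) -> I -> R -> R)
    (op_ge0 : forall x y : R, (0 <= x)%R -> (0 <= y)%R -> (0 <= op x y)%R)
    (opA : forall x y z : R, (0 <= x)%R -> (0 <= y)%R -> (0 <= z)%R ->
             op x (op y z) = op (op x y) z)
    (op_monol : forall x x' y : R, (0 <= x)%R -> (x <= x')%R -> (0 <= y)%R ->
             (op x y <= op x' y)%R)
    (op_monor : forall x y y' : R, (0 <= x)%R -> (0 <= y)%R -> (y <= y')%R ->
             (op x y <= op x y')%R)
    (op0x : forall x : R, (0 <= x)%R -> op 0 x = x)
    (opx0 : forall x : R, (0 <= x)%R -> op x 0 = x)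
    (phi_ge0 : forall P q (x : R), (0 <= x)%R -> (0 <= phi P q x)%R)
    (phi_mono : forall P q (x y : R), (0 <= x)%R -> (x <= y)%R ->
                  (phi P q x <= phi P q y)%R)
    (L : seq (term I)) (HL : contraction_path L) :
  (exists A B, ORDER op phi L A B) /\
  forall A B, ORDER op phi L A B ->
    [/\ is_loop_order L A,
        (forall A', is_loop_order L A' -> (fcost op phi L A <= fcost op phi L A')%R)
      & match B with
        | Some B0 =>
            [/\ is_loop_order L B0, lroot B0 != lroot A &
                forall B', is_loop_order L B' -> lroot B' != lroot A ->
                  (fcost op phi L B0 <= fcost op phi L B')%R]
        | None => forall B', is_loop_order L B' -> lroot B' = lroot A
        end].
Proof.
split; first exact: (order_exists op_ge0 op_monol op_monor phi_ge0 phi_mono HL).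
exact: (order_sound op_ge0 op_monol op_monor phi_ge0 phi_mono HL).
Qed.
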